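(* Let $X$ be a real Banach space and $p:X\to\mathbb{R}$ be convex. Suppose there exist $x\in X$ and $\xi\ge0$ such that $|p(u)-p(x)|\le\xi\|u-x\|$ for all $u\in X$. Then $p$ is Lipschitz continuous on $X$ with constant $\xi$, and for any $u\in X$ and any $x^*\in\partial p(u)$ it holds $\|x^*\|\le\xi$.
   Context: For convex $p$, $\partial p(u):=\{x^*\in X^*\mid \langle x^*,v-u\rangle\le p(v)-p(u)\ \forall v\in X\}$. *)

From Stdlib Require Import Reals Lra.
Open Scope R_scope.

Record NormedSpace := {
  ns_car :> Type;
  ns_zero : ns_car;
  ns_add : ns_car -> ns_car -> ns_car;
  ns_opp : ns_car -> ns_car;
  ns_scal : R -> ns_car -> ns_car;
  ns_norm : ns_car -> R;
  ns_addA : forall x y z, ns_add x (ns_add y z) = ns_add (ns_add x y) z;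
  ns_addC : forall x y, ns_add x y = ns_add y x;
  ns_add0 : forall x, ns_add x ns_zero = x;
  ns_addN : forall x, ns_add x (ns_opp x) = ns_zero;
  ns_scalA : forall a b x, ns_scal a (ns_scal b x) = ns_scal (a * b) x;
  ns_scal1 : forall x, ns_scal 1 x = x;
  ns_scalDr : forall a x y, ns_scal a (ns_add x y) = ns_add (ns_scal a x) (ns_scal a y);
  ns_scalDl : forall a b x, ns_scal (a + b) x = ns_add (ns_scal a x) (ns_scal b x);
  ns_norm_ge0 : forall x, 0 <= ns_norm x;
  ns_norm_eq0 : forall x, ns_norm x = 0 -> x = ns_zero;
  ns_normZ : forall a x, ns_norm (ns_scal a x) = Rabs a * ns_norm x;
  ns_normD : forall x y, ns_norm (ns_add x y) <= ns_norm x + ns_norm y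
}.

Arguments ns_zero {_}.
Arguments ns_add {_}.
Arguments ns_opp {_}.
Arguments ns_scal {_}.
Arguments ns_norm {_}.

Definition ns_sub {X : NormedSpace} (x y : X) : X := ns_add x (ns_opp y).

Definition complete (X : NormedSpace) : Prop :=
  forall s : nat -> X,
    (forall eps, 0 < eps -> exists N, forall m n, (N <= m)%nat -> (N <= n)%nat ->
        ns_norm (ns_sub (s m) (s n)) < eps) ->
    exists l : X, forall eps, 0 < eps -> exists N, forall n, (N <= n)%nat ->
        ns_norm (ns_sub (s n) l) < eps.

Record BanachSpace := {
  bs_ns :> NormedSpace;
  bs_complete : complete bs_ns
}.

Definition convex {X : NormedSpace} (p : X -> R) : Prop :=
  forall (x y : X) (t : R), 0 <= t <= 1 ->
    p (ns_add (ns_scal t x) (ns_scal (1 - t) y)) <= t * p x + (1 - t) * p y.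

Definition lipschitz {X : NormedSpace} (p : X -> R) (L : R) : Prop :=
  forall u v : X, Rabs (p u - p v) <= L * ns_norm (ns_sub u v).

Record dual (X : NormedSpace) := {
  dfun :> X -> R;
  dfun_add : forall x y, dfun (ns_add x y) = dfun x + dfun y;
  dfun_scal : forall a x, dfun (ns_scal a x) = a * dfun x;
  dfun_bounded : exists M, forall x, Rabs (dfun x) <= M * ns_norm x
}.
Arguments dfun {X}.

Definition dual_norm_set {X : NormedSpace} (f : dual X) (r : R) : Prop :=
  exists v : X, ns_norm v <= 1 /\ r = Rabs (f v).

Lemma norm_zero (X : NormedSpace) : ns_norm (@ns_zero X) = 0.
Proof.
  assert (H : (@ns_zero X) = ns_scal 0 ns_zero).
  { pose (z := ns_scal 0 (@ns_zero X)); change (ns_zero = z).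
    assert (Hz : z = ns_add z z).
    { unfold z. rewrite <- ns_scalDl. f_equal. ring. }
    rewrite <- (ns_addN X z). rewrite Hz at 1.
    rewrite <- ns_addA, ns_addN, ns_add0. reflexivity. }
  rewrite H, ns_normZ, Rabs_R0. ring.
Qed.

Lemma dual_norm_set_bound {X : NormedSpace} (f : dual X) : bound (dual_norm_set f).
Proof.
  destruct (dfun_bounded X f) as [M HM].
  exists (Rmax M 0). intros r [v [Hv ->]].
  specialize (HM v). pose proof (ns_norm_ge0 X v).
  destruct (Rle_dec 0 M).
  - rewrite Rmax_left by lra. apply Rle_trans with (M * ns_norm v); [exact HM|].
    rewrite <- (Rmult_1_r M) at 2. apply Rmult_le_compat_l; lra.
  - rewrite Rmax_right by lra. apply Rle_trans with (M * ns_norm v); [exact HM|].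
    assert (M * ns_norm v <= 0) by nra. lra.
Qed.

Lemma dual_norm_set_ne {X : NormedSpace} (f : dual X) : exists r, dual_norm_set f r.
Proof.
  exists (Rabs (f ns_zero)). exists ns_zero. split; [rewrite norm_zero; lra | reflexivity].
Qed.

Definition dual_norm {X : NormedSpace} (f : dual X) : R :=
  proj1_sig (completeness (dual_norm_set f) (dual_norm_set_bound f) (dual_norm_set_ne f)).

Definition subdiff {X : NormedSpace} (p : X -> R) (u : X) (xs : dual X) : Prop :=
  forall v : X, xs (ns_sub v u) <= p v - p u.

(* Convexity turns the one-point bound into a global one: for t >= 1 the secant
   slope from u to v is at most the slope from u to u + t (v - u), and the latter
   is at most xi ||v - u|| + 2 xi ||u - x|| / t by the hypothesis at x.  Letting
   t grow gives p v - p u <= xi ||v - u||, which is the Lipschitz bound and,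
   applied along the directions u +- v, bounds every subgradient at u. *)
From Stdlib Require Import Reals Lra.
Open Scope R_scope.

Section NormedSpaceAlgebra.
Variable X : NormedSpace.

Lemma ns_scal0 (x : X) : ns_scal 0 x = ns_zero.
Proof.
  set (z := ns_scal 0 x).
  assert (Hzz : z = ns_add z z).
  { unfold z. rewrite <- ns_scalDl. f_equal. ring. }
  change (z = ns_zero). rewrite <- (ns_addN X z). rewrite Hzz at 2.
  rewrite <- ns_addA, ns_addN, ns_add0. reflexivity.
Qed.

Lemma ns_oppE (x : X) : ns_opp x = ns_scal (-1) x.
Proof.
  rewrite <- (ns_add0 X (ns_scal (-1) x)), <- (ns_addN X x), ns_addA.
  rewrite <- (ns_scal1 X x) at 3.
  rewrite <- ns_scalDl. replace (-1 + 1) with 0 by ring.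
  rewrite ns_scal0, ns_addC, ns_add0. reflexivity.
Qed.

Lemma ns_normN1 (x : X) : ns_norm (ns_scal (-1) x) = ns_norm x.
Proof.
  rewrite ns_normZ, Rabs_left by lra. ring.
Qed.

Lemma ns_addKsub (u w : X) : ns_sub (ns_add u w) u = w.
Proof.
  unfold ns_sub. rewrite (ns_addC X u w), <- ns_addA, ns_addN, ns_add0.
  reflexivity.
Qed.

Lemma ns_norm_subC (u v : X) : ns_norm (ns_sub v u) = ns_norm (ns_sub u v).
Proof.
  replace (ns_sub v u) with (ns_scal (-1) (ns_sub u v)) by
    (unfold ns_sub; rewrite !ns_oppE, ns_scalDr, ns_scalA;
     replace (-1 * -1) with 1 by ring; rewrite ns_scal1, ns_addC; reflexivity).
  apply ns_normN1.
Qed.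

Lemma ns_sub_addl (u x w : X) : ns_sub (ns_add u w) x = ns_add (ns_sub u x) w.
Proof. unfold ns_sub. rewrite <- !ns_addA. f_equal. apply ns_addC. Qed.

Lemma ns_convex_comb_ray (u v : X) (t : R) : t <> 0 ->
  ns_add (ns_scal (/ t) (ns_add u (ns_scal t (ns_sub v u)))) (ns_scal (1 - / t) u) = v.
Proof.
  intros Ht. unfold ns_sub.
  rewrite ns_scalDr, ns_scalA, Rinv_l, ns_scal1, ns_oppE by exact Ht.
  rewrite (ns_addC X v), ns_addA, <- ns_scalDl, <- ns_addA, (ns_addC X v), ns_addA,
    <- ns_scalDl.
  replace (/ t + -1 + (1 - / t)) with 0 by ring.
  rewrite ns_scal0, ns_addC, ns_add0. reflexivity.
Qed.

End NormedSpaceAlgebra.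

Lemma Rle0_of_scaled_bounded (a C : R) : (forall t, 1 <= t -> t * a <= C) -> a <= 0.
Proof.
  intros Hbound. destruct (Rle_dec a 0) as [|Ha]; [assumption|].
  specialize (Hbound (Rabs C / a + 1)).
  replace ((Rabs C / a + 1) * a) with (Rabs C + a) in Hbound by (field; lra).
  assert (0 <= Rabs C / a) by (apply Rmult_le_pos; [apply Rabs_pos | apply Rlt_le, Rinv_0_lt_compat; lra]).
  pose proof (Rle_abs C). lra.
Qed.

Section ConvexFunction.
Variables (X : NormedSpace) (p : X -> R).
Hypothesis p_convex : convex p.

Lemma convex_secant_ray (u v : X) (t : R) : 1 <= t ->
  t * (p v - p u) <= p (ns_add u (ns_scal t (ns_sub v u))) - p u.
Proof.
  intros Ht.
  set (w := ns_add u (ns_scal t (ns_sub v u))).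
  assert (Hinv : 0 <= / t <= 1).
  { split; [apply Rlt_le, Rinv_0_lt_compat; lra|].
    rewrite <- Rinv_1. apply Rinv_le_contravar; lra. }
  pose proof (p_convex w u (/ t) Hinv) as Hconv.
  unfold w in Hconv. rewrite ns_convex_comb_ray in Hconv by lra. fold w in Hconv.
  apply Rmult_le_compat_l with (r := t) in Hconv; [|lra].
  replace (t * (/ t * p w + (1 - / t) * p u)) with (p w + (t - 1) * p u) in Hconv
    by (field; lra).
  lra.
Qed.

Variables (x : X) (xi : R).
Hypothesis xi_ge0 : 0 <= xi.
Hypothesis p_bound_at_x : forall u : X, Rabs (p u - p x) <= xi * ns_norm (ns_sub u x).

Lemma convex_increment_le (u v : X) : p v - p u <= xi * ns_norm (ns_sub v u).
Proof.
  set (d := ns_sub v u).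
  set (N := ns_norm (ns_sub u x)).
  enough (p v - p u - xi * ns_norm d <= 0) by lra.
  apply (Rle0_of_scaled_bounded _ (2 * xi * N)). intros t Ht.
  set (w := ns_add u (ns_scal t d)).
  pose proof (convex_secant_ray u v t Ht) as Hsecant. fold d w in Hsecant.
  assert (Hw_norm : ns_norm (ns_sub w x) <= N + t * ns_norm d).
  { unfold w. rewrite ns_sub_addl. eapply Rle_trans; [apply ns_normD|].
    rewrite ns_normZ, Rabs_right by lra. unfold N. lra. }
  assert (Hw : p w - p x <= xi * (N + t * ns_norm d)).
  { eapply Rle_trans; [apply Rle_abs|]. eapply Rle_trans; [apply p_bound_at_x|].
    apply Rmult_le_compat_l; assumption. }
  assert (Hu : p x - p u <= xi * N).
  { eapply Rle_trans; [apply Rle_abs|].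
    rewrite <- Rabs_Ropp, Ropp_minus_distr. apply p_bound_at_x. }
  nra.
Qed.

Lemma convex_lipschitz : lipschitz p xi.
Proof.
  intros u v. apply Rabs_le. split.
  - pose proof (convex_increment_le u v) as Hvu. rewrite ns_norm_subC in Hvu. lra.
  - apply convex_increment_le.
Qed.

Lemma subdiff_le (u : X) (xs : dual X) (v : X) :
  subdiff p u xs -> xs v <= xi * ns_norm v.
Proof.
  intros Hsub. pose proof (Hsub (ns_add u v)) as Hs.
  pose proof (convex_increment_le u (ns_add u v)) as Hinc.
  rewrite ns_addKsub in Hs, Hinc. lra.
Qed.

End ConvexFunction.

Lemma dual_norm_le (X : NormedSpace) (f : dual X) (c : R) : 0 <= c ->
  (forall v, f v <= c * ns_norm v) -> dual_norm f <= c.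
Proof.
  intros Hc Hf. unfold dual_norm.
  apply (proj2 (proj2_sig (completeness _ _ _))). intros r [v [Hv ->]].
  assert (Hcv : c * ns_norm v <= c) by (rewrite <- (Rmult_1_r c) at 2; apply Rmult_le_compat_l; lra).
  pose proof (Hf v) as Hpos. pose proof (Hf (ns_scal (-1) v)) as Hneg.
  rewrite dfun_scal, ns_normN1 in Hneg.
  apply Rabs_le. lra.
Qed.

Theorem mainTheorem5 (X : BanachSpace) (p : X -> R) (hp : convex p)
  (x : X) (xi : R) (hxi : 0 <= xi)
  (hloc : forall u : X, Rabs (p u - p x) <= xi * ns_norm (ns_sub u x)) :
  lipschitz p xi /\
  (forall (u : X) (xs : dual X), subdiff p u xs -> dual_norm xs <= xi).
Proof.
  split.
  - exact (convex_lipschitz X p hp x xi hxi hloc).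
  - intros u xs Hsub. apply dual_norm_le; [exact hxi|].
    intros v. exact (subdiff_le X p hp x xi hxi hloc u xs v Hsub).
Qed.
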